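(* Let $N\ge1$. (a) For a proper layered colored planar tree $T$, the breadth-first order $\ll$ coincides with the order $\prec_r$ on the set of non-degenerate vertices of $T$ if and only if $T$ is simple and order reduced (i.e. $T\in\mathbf{OST}$). (b) For every $j\in\langle N\rangle$ and word $u$, the contraction map $\rho$ is a bijection of $\mathbf{OST}_u^j$ onto $\mathbf{RT}_u^j$. (c) If $T\in\mathbf{RT}_u^j$ and $T'$ is the unique tree in $\mathbf{OST}_u^j$ with $\rho(T')=T$, then $\Omega(T')=\Lambda_{\uparrow r}(T)$ and $\ell(T')=\mathbf v(T)$.
   Context: Let $\langle N\rangle=\{1,\dots,N\}$. $\mathcal H^N$ denotes the free unital associative complex algebra on symbols $Y_u^i$ ($i\in\langle N\rangle$, $u$ a word over $\langle N\rangle$ of length $\ge2$), with the convention $Y_j^i=\delta_{ij}1$ for letters $i,j$. Trees: a colored planar tree is a finite rooted tree with linearly ordered children at each vertex and colors $c(x)\in\langle N\rangle$ on vertices such that if $x$ has exactly one child $y$ then $c(y)=c(x)$; trees are up to isomorphism. Root at level $0$, children of level-$k$ vertices at level $k+1$; vertices of a level are ordered left to right (by parents, then among siblings). Leaf: no children; unary: exactly one child; non-degenerate: at least two children. Layered: all leaves on the same level $h$, and $\ell(T)=h$ is the number of layers. Proper: every level $k<h$ contains a non-degenerate vertex. Simple: each level contains at most one non-degenerate vertex. A layered tree is order contractible at a non-degenerate non-root vertex $x$ on level $k$ if its parent $x'$ is unary, no non-degenerate vertex lies to the right of $x$ on level $k$, and no non-degenerate vertex lies to the left of $x'$ on level $k-1$;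 it is order reduced if it is order contractible at no vertex. $\mathbf{OST}_u^j$: proper simple order reduced layered colored planar trees with root colored $j$ and leaves colored (left to right) by $u$. A tree is reduced if it has no unary vertices; $\mathbf{RT}_u^j$: reduced colored planar trees with root colored $j$ and leaves colored (left to right) by $u$. The contraction $\rho(T)$ of a tree $T$ is obtained by contracting every edge from a unary vertex to its child (identifying the two, which have the same color); the non-degenerate vertices of $T$ are thereby identified with the non-leaf vertices of $\rho(T)$. Orders: $x\ll y$ iff $x$ is on a deeper level than $y$, or on the same level and to the left of $y$. $x\prec_r y$ iff $y$ is a proper ancestor of $x$, or, with $z$ the nearest common ancestor of $x,y$, the child of $z$ towards $x$ is to the right of the child of $z$ towards $y$. For a non-leaf $x$ with children $y_1<\dots<y_k$, $Y(x)=Y^{c(x)}_{c(y_1)\cdots c(y_k)}$. $\Omega(T')=\prod Y(x)$ over the non-degenerate vertices of $T'$ in increasing $\ll$ order; $\Lambda_{\uparrow r}(T)=\prod Y(x)$ over the non-leaf vertices of $T$ in increasing $\prec_r$ order; $\mathbf v(T)$ is the number of non-leaf vertices of $T$. *)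

From mathcomp Require Import all_boot all_order all_algebra.
Set Implicit Arguments. Unset Strict Implicit. Unset Printing Implicit Defensive.
Import GRing.Theory.
Local Open Scope ring_scope.

(* Colored planar rooted trees, as plain planar trees with a nat color at each
   vertex.  Trees "up to isomorphism" = structural equality of this datatype. *)
Inductive ctree : Type := Node of nat & seq ctree.

Definition root_color (t : ctree) : nat := let: Node c _ := t in c.
Definition kids (t : ctree) : seq ctree := let: Node _ ts := t in ts.
Definition leaf0 : ctree := Node 0 [::].

Fixpoint wf_colors (N : nat) (t : ctree) : bool :=
  let: Node c ts := t in
  [&& (1 <= c <= N)%N,
      (if ts is [:: s] then root_color s == c else true)
    & all (wf_colors N) ts].

(* Vertices are addressed by paths from the root: the list of child indices. *)
Fixpoint subtree (t : ctree) (p : seq nat) : option ctree :=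
  match p with
  | [::] => Some t
  | i :: p' => if (i < size (kids t))%N then subtree (nth leaf0 (kids t) i) p'
               else None
  end.

Definition is_vertex (t : ctree) (p : seq nat) : bool :=
  if subtree t p is Some _ then true else false.
Definition nchildren (t : ctree) (p : seq nat) : nat :=
  if subtree t p is Some s then size (kids s) else 0.
Definition is_leaf t p := is_vertex t p && (nchildren t p == 0)%N.
Definition is_unary t p := is_vertex t p && (nchildren t p == 1)%N.
Definition is_nondeg t p := is_vertex t p && (2 <= nchildren t p)%N.
Definition is_nonleaf t p := is_vertex t p && (0 < nchildren t p)%N.

Fixpoint verts (t : ctree) : seq (seq nat) :=
  let: Node _ ts := t in
  [::] :: (fix aux (i : nat) (l : seq ctree) : seq (seq nat) :=
             match l with
             | [::] => [::]
             | s :: l' => map (cons i) (verts s) ++ aux i.+1 l'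
             end) 0 ts.

(* Height = largest level of a vertex; level of a vertex = length of its path. *)
Fixpoint height (t : ctree) : nat :=
  let: Node _ ts := t in
  if ts is [::] then 0 else (foldr maxn 0 (map height ts)).+1.

Fixpoint leaves_word (t : ctree) : seq nat :=
  let: Node c ts := t in
  if ts is [::] then [:: c] else flatten (map leaves_word ts).

(* Left-to-right order among vertices of the same level: lexicographic order
   on paths (parents first, then siblings). *)
Fixpoint lexlt (x y : seq nat) : bool :=
  match x, y with
  | a :: x', b :: y' => if a == b then lexlt x' y' else (a < b)%N
  | _, _ => false
  end.

Definition ll (x y : seq nat) : bool :=
  (size y < size x)%N || ((size x == size y) && lexlt x y).

(* x prec_r y : y is a proper ancestor of x, or at the nearest common ancestor
   the branch towards x is to the right of the branch towards y. *)
Fixpoint precr (x y : seq nat) : bool :=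
  match x, y with
  | _, [::] => x != [::]
  | [::], _ :: _ => false
  | a :: x', b :: y' => if a == b then precr x' y' else (b < a)%N
  end.

Definition tlayered (t : ctree) : Prop :=
  forall p, is_leaf t p -> size p = height t.
Definition nlayers (t : ctree) : nat := height t.

Definition tproper (t : ctree) : Prop :=
  forall k, (k < height t)%N -> exists p, is_nondeg t p /\ size p = k.

Definition tsimple (t : ctree) : Prop :=
  forall x y, is_nondeg t x -> is_nondeg t y -> size x = size y -> x = y.

Definition order_contractible_at (t : ctree) (x : seq nat) : Prop :=
  is_nondeg t x /\
  exists x' i, x = rcons x' i /\ is_unary t x' /\
    (forall y, is_nondeg t y -> size y = size x -> ~~ lexlt x y) /\
    (forall z, is_nondeg t z -> size z = size x' -> ~~ lexlt z x').

Definition order_reduced (t : ctree) : Prop :=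
  forall x, ~ order_contractible_at t x.

Fixpoint treduced (t : ctree) : bool :=
  let: Node _ ts := t in (size ts != 1)%N && all treduced ts.

Definition OST (N j : nat) (u : seq nat) (t : ctree) : Prop :=
  [/\ wf_colors N t, root_color t = j, leaves_word t = u,
      tlayered t /\ tproper t & tsimple t /\ order_reduced t].

Definition RT (N j : nat) (u : seq nat) (t : ctree) : Prop :=
  [/\ wf_colors N t, treduced t, root_color t = j & leaves_word t = u].

Fixpoint rho (t : ctree) : ctree :=
  let: Node c ts := t in
  match ts with
  | [:: s] => rho s
  | _ => Node c (map rho ts)
  end.

(* The generators Y_u^i of H^N, interpreted in an arbitrary ring R through an
   assignment Y, with the convention Y_j^i = delta_ij. *)
Definition Ysym (R : pzRingType) (Y : nat -> seq nat -> R) (i : nat) (u : seq nat) : R :=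
  if u is [:: j] then (i == j)%:R else Y i u.

Definition Yvert (R : pzRingType) (Y : nat -> seq nat -> R) (t : ctree) (p : seq nat) : R :=
  if subtree t p is Some (Node c ts) then Ysym Y c (map root_color ts) else 1.

Definition lle x y := (x == y) || ll x y.
Definition prle x y := (x == y) || precr x y.

Definition Omega (R : pzRingType) (Y : nat -> seq nat -> R) (t : ctree) : R :=
  \prod_(x <- sort lle [seq p <- verts t | is_nondeg t p]) Yvert Y t x.

Definition Lambda_r (R : pzRingType) (Y : nat -> seq nat -> R) (t : ctree) : R :=
  \prod_(x <- sort prle [seq p <- verts t | is_nonleaf t p]) Yvert Y t x.

Definition nvert (t : ctree) : nat := size [seq p <- verts t | is_nonleaf t p].

From HB Require Import structures.
From mathcomp Require Import all_boot all_order all_algebra.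
From mathcomp Require Import zify.
Set Implicit Arguments. Unset Strict Implicit. Unset Printing Implicit Defensive.
Import GRing.Theory.

(* List the non-degenerate vertices of a tree in right-to-left post-order: this
   is their increasing enumeration for prec_r, and contracting the unary
   vertices changes neither its length nor the product of the Y(x) along it.
   In a proper layered tree, << and prec_r agree on the non-degenerate vertices
   iff these sit one per level and the post-order visits them from the deepest
   level up, i.e. iff their levels, read from the root, are 0, 1, ..., l-1; and
   this is also equivalent to being simple and order reduced.  A tree of OST is
   thus determined by its contraction T: it has l = v(T) layers and the level
   of each of its non-degenerate vertices is forced.  Conversely T is
   the contraction of the tree obtained by inserting unary vertices so that the
   non-degenerate vertices of each branch lie just below those of the branches
   to its left.  Along the common post-order, Omega(T') and Lambda(T) are the
   same product. *)

Section NestedInduction.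
Variable P : ctree -> Prop.
Hypothesis P_node : forall c ts, List.Forall P ts -> P (Node c ts).

Fixpoint ctree_ind_Forall (t : ctree) : P t :=
  let: Node c ts := t in
  P_node c ((fix forall_ts l : List.Forall P l :=
     if l is s :: l' then List.Forall_cons s (ctree_ind_Forall s) (forall_ts l')
     else List.Forall_nil P) ts).
End NestedInduction.

Fixpoint gentree_of_ctree (t : ctree) : GenTree.tree nat :=
  let: Node c ts := t in GenTree.Node c (map gentree_of_ctree ts).
Fixpoint ctree_of_gentree (t : GenTree.tree nat) : ctree :=
  match t with
  | GenTree.Leaf _ => leaf0
  | GenTree.Node c ts => Node c (map ctree_of_gentree ts)
  end.

Lemma gentree_of_ctreeK : cancel gentree_of_ctree ctree_of_gentree.
Proof.
elim/ctree_ind_Forall => c ts IH /=; congr Node.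
by elim: IH => //= s l -> _ ->.
Qed.
HB.instance Definition _ := Equality.copy ctree (can_type gentree_of_ctreeK).

Lemma ctree_ind_in (P : ctree -> Prop) :
  (forall c ts, {in ts, forall s, P s} -> P (Node c ts)) -> forall t, P t.
Proof.
move=> P_node; elim/ctree_ind_Forall => c ts IH; apply: P_node.
elim: IH => //= s l Ps _ IH s'; rewrite in_cons => /orP[/eqP -> //|]; exact: IH.
Qed.

Lemma lexlt_irr x : lexlt x x = false.
Proof. by elim: x => //= a x IH; rewrite eqxx. Qed.

Lemma lexlt_trans x y z : lexlt x y -> lexlt y z -> lexlt x z.
Proof.
elim: x y z => [|a x IH] [|b y] [|c z] //=.
do 3 (case: eqP => [?|?]); subst => //=; try exact: IH; lia.
Qed.

Lemma lexlt_asym x y : lexlt x y -> lexlt y x = false.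
Proof.
by move=> xy; apply/negbTE/negP => /(lexlt_trans xy); rewrite lexlt_irr.
Qed.

Lemma lexlt_total x y : size x = size y -> x != y -> lexlt x y || lexlt y x.
Proof.
elim: x y => [|a x IH] [|b y] //= [] sxy.
rewrite eqseq_cons; case: eqP => [->|ab] /=; rewrite ?eqxx; first exact: IH.
by case: eqP => [ba|_ _]; [case: ab | lia].
Qed.

Lemma precr_eq_size x y : size x = size y -> precr x y = lexlt y x.
Proof.
elim: x y => [|a x IH] [|b y] //= [] sxy.
by rewrite eq_sym; case: eqP => // _; exact: IH.
Qed.

Lemma lexlt_precr_cat x z s : size x = size z -> lexlt z x -> precr (x ++ s) z.
Proof.
elim: x z => [|a x IH] [|b z] //= [] sxz.
by rewrite eq_sym; case: eqP => // _; exact: IH.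
Qed.

Lemma lexlt_precr_catF x z s :
  size x = size z -> lexlt x z -> precr (x ++ s) z = false.
Proof.
elim: x z => [|a x IH] [|b z] //= [] sxz.
case: eqP => [_|_ ab]; first exact: IH.
by apply/negbTE; rewrite -leqNgt ltnW.
Qed.

Lemma precr_cat_prefix x s : s != [::] -> precr (x ++ s) x.
Proof. by move=> s0; elim: x => [|a x IH] /=; [case: s s0 | rewrite eqxx]. Qed.

Lemma precr_asym x y : precr x y -> precr y x = false.
Proof.
elim: x y => [|a x IH] [|b y] //=.
case: eqP => [->|ab]; rewrite ?eqxx; first exact: IH.
case: eqP => [ba|_ ba]; first by case: ab.
by apply/negbTE; rewrite -leqNgt ltnW.
Qed.

Lemma precr_irr x : precr x x = false.
Proof. by apply/negbTE/negP => xx; have := precr_asym xx; rewrite xx. Qed.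

Lemma precr_trans x y z : precr x y -> precr y z -> precr x z.
Proof.
elim: x y z => [|a x IH] [|b y] [|c z] //=.
do 3 (case: eqP => [?|?]); subst => //=; try exact: IH; lia.
Qed.

Lemma precr_total x y : x != y -> precr x y || precr y x.
Proof.
elim: x y => [|a x IH] [|b y] //=.
rewrite eqseq_cons; case: eqP => [->|ab] /=; rewrite ?eqxx; first exact: IH.
by case: eqP => [ba|_ _]; [case: ab | lia].
Qed.

Lemma ll_irr x : ll x x = false.
Proof. by rewrite /ll ltnn eqxx lexlt_irr. Qed.

Lemma ll_trans x y z : ll x y -> ll y z -> ll x z.
Proof.
rewrite /ll => /orP[xy|/andP[/eqP exy xy]] /orP[yz|/andP[/eqP eyz yz]].
- by rewrite (ltn_trans yz xy).
- by rewrite -eyz xy.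
- by rewrite exy yz.
- by rewrite exy eyz eqxx (lexlt_trans xy yz) orbT.
Qed.

Lemma ll_asym x y : ll x y -> ll y x = false.
Proof. by move=> xy; apply/negbTE/negP => /(ll_trans xy); rewrite ll_irr. Qed.

Lemma prle_trans : transitive prle.
Proof.
move=> y x z /orP[/eqP -> //|xy] /orP[/eqP <-|yz]; rewrite /prle.
  by rewrite xy orbT.
by rewrite (precr_trans xy yz) orbT.
Qed.

Lemma prle_anti : antisymmetric prle.
Proof.
move=> x y; rewrite /prle; case: eqP => //= _ /andP[xy].
by rewrite (precr_asym xy) orbF => /eqP.
Qed.

Lemma prle_total : total prle.
Proof.
by move=> x y; rewrite /prle; case: (eqVneq x y) => //= /precr_total.
Qed.

Lemma lle_trans : transitive lle.
Proof.
move=> y x z /orP[/eqP -> //|xy] /orP[/eqP <-|yz]; rewrite /lle.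
  by rewrite xy orbT.
by rewrite (ll_trans xy yz) orbT.
Qed.

Lemma lle_anti : antisymmetric lle.
Proof.
move=> x y; rewrite /lle; case: eqP => //= _ /andP[xy].
by rewrite (ll_asym xy) orbF => /eqP.
Qed.

Lemma lle_total : total lle.
Proof.
move=> x y; rewrite /lle /ll; case: (eqVneq x y) => //= xy.
by case: (ltngtP (size x) (size y)) => //= /lexlt_total; apply.
Qed.

(** * Breadth-first order versus prec_r *)

Lemma subtree_rcons t x i : subtree t (rcons x i) =
  if subtree t x is Some s then
    if i < size (kids s) then Some (nth leaf0 (kids s) i) else None
  else None.
Proof. by elim: x t => [|a x IH] [c ts] //=; case: ifP. Qed.

Lemma is_vertex_rcons t x i :
  is_vertex t (rcons x i) = is_vertex t x && (i < nchildren t x).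
Proof.
by rewrite /is_vertex /nchildren subtree_rcons; case: (subtree t x) => // s; case: ifP.
Qed.

Lemma leq_foldr_maxn (l : seq nat) n : n \in l -> n <= foldr maxn 0 l.
Proof.
elim: l => //= m l IH; rewrite in_cons => /orP[/eqP ->|/IH]; first exact: leq_maxl.
by move/leq_trans; apply; exact: leq_maxr.
Qed.

Lemma vertex_size_le_height t p : is_vertex t p -> size p <= height t.
Proof.
elim/ctree_ind_in: t p => c ts IH [|i q] //; rewrite /is_vertex /=.
case: ifP => // lt_i_ts vq; have ts_i := mem_nth leaf0 lt_i_ts.
have := IH _ ts_i q; rewrite /is_vertex vq => /(_ isT).
have := leq_foldr_maxn (map_f height ts_i).
by case: ts {IH vq} lt_i_ts ts_i => //= s l _ _ hmax hq; rewrite ltnS (leq_trans hq).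
Qed.

Lemma nondeg_size_lt_height t x : is_nondeg t x -> size x < height t.
Proof.
case/andP => vx nx; have : is_vertex t (rcons x 0) by rewrite is_vertex_rcons vx; lia.
by move/vertex_size_le_height; rewrite size_rcons.
Qed.

Definition orders_agree t :=
  forall x y, is_nondeg t x -> is_nondeg t y -> (ll x y <-> precr x y).

Lemma orders_agree_simple t : orders_agree t -> tsimple t.
Proof.
move=> agree x y nx ny sxy; apply/eqP/negPn/negP => xy.
wlog lt_xy : x y nx ny sxy xy / lexlt x y.
  move=> wlog_xy; case/orP: (lexlt_total sxy xy); first exact: wlog_xy.
  by apply: wlog_xy; rewrite // eq_sym.
have : ll x y by rewrite /ll sxy eqxx lt_xy orbT.
by move/(agree x y nx ny); rewrite precr_eq_size // lexlt_asym.
Qed.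

Lemma orders_agree_order_reduced t :
  tproper t -> orders_agree t -> order_reduced t.
Proof.
move=> proper agree x [nx [x' [i [ex [ux' [_ left_x']]]]]]; subst x.
have [z [nz sz]] : exists z, is_nondeg t z /\ size z = size x'.
  by apply: proper; have := nondeg_size_lt_height nx; rewrite size_rcons; lia.
have zx' : x' != z.
  by apply: contraTneq nz => <-; move: ux'; rewrite /is_nondeg => /andP[-> /eqP ->].
have lt_x'z : lexlt x' z.
  case/orP: (lexlt_total (esym sz) zx') => // lt_zx'.
  by have := left_x' z nz sz; rewrite lt_zx'.
(* [x] is deeper than [z], but descends from [x'] which lies left of [z]. *)
have : ll (rcons x' i) z by rewrite /ll sz size_rcons ltnSn.
by move/(agree _ z nx nz); rewrite -cats1 lexlt_precr_catF.
Qed.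

Section SimpleOrderReduced.
Variable t : ctree.
Hypotheses (proper : tproper t) (simple : tsimple t) (reduced : order_reduced t).

Lemma nondeg_precr_level_above x : is_nondeg t x -> 0 < size x ->
  exists w, [/\ is_nondeg t w, size w = (size x).-1 & precr x w].
Proof.
case/lastP: x => [//|x' i] nx _; rewrite size_rcons /=.
move: (nx) => /andP[]; rewrite is_vertex_rcons => /andP[vx' lt_i] _.
have [w [nw sw]] : exists w, is_nondeg t w /\ size w = size x'.
  by apply: proper; have := nondeg_size_lt_height nx; rewrite size_rcons; lia.
(* Unless [w] is the parent [x'] of [x], [x'] is unary, and [w] cannot lie to
   its right or [x] would be order contractible. *)
exists w; split => //; have [-> | wx'] := eqVneq w x'.
  by rewrite -cats1 precr_cat_prefix.
have ux' : is_unary t x'.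
  rewrite /is_unary vx' eqn_leq (leq_ltn_trans (leq0n i) lt_i) andbT leqNgt.
  apply: contra wx' => nx'.
  by rewrite (simple nw (_ : is_nondeg t x') sw) // /is_nondeg vx'.
have [lt_wx' | ge_wx'] := boolP (lexlt w x'); first by rewrite -cats1 lexlt_precr_cat.
case: (reduced (x := rcons x' i)); split => //; exists x', i; do 3!split => //.
- by move=> y ny sy; rewrite (simple ny nx sy) lexlt_irr.
- by move=> z nz sz; rewrite (simple nz nw (etrans sz (esym sw))).
Qed.

Lemma precr_deeper_nondeg x y : is_nondeg t x -> is_nondeg t y ->
  size y < size x -> precr x y.
Proof.
move=> nx ny; have [n] := ubnP (size x); elim: n x nx => // n IH x nx lt_xn yx.
have [w [nw sw xw]] := nondeg_precr_level_above nx (leq_ltn_trans (leq0n _) yx).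
case: (ltngtP (size y) (size w)) => yw.
- by apply: precr_trans xw (IH w nw _ yw); lia.
- lia.
- by rewrite (simple nw ny (esym yw)) in xw.
Qed.

Lemma simple_order_reduced_orders_agree : orders_agree t.
Proof.
move=> x y nx ny; rewrite /ll; case: (ltngtP (size x) (size y)) => sxy.
- by rewrite (precr_asym (precr_deeper_nondeg ny nx sxy)).
- by rewrite (precr_deeper_nondeg nx ny sxy).
- by rewrite (simple nx ny sxy) lexlt_irr precr_irr.
Qed.

End SimpleOrderReduced.

Lemma orders_agree_iff t :
  tproper t -> orders_agree t <-> tsimple t /\ order_reduced t.
Proof.
move=> proper; split.
- by split; [exact: orders_agree_simple | exact: orders_agree_order_reduced].
- by case; exact: simple_order_reduced_orders_agree.
Qed.

(** * Post-order of the non-degenerate vertices *)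

Fixpoint verts_forest (i : nat) (l : seq ctree) : seq (seq nat) :=
  if l is s :: l' then map (cons i) (verts s) ++ verts_forest i.+1 l' else [::].

Lemma verts_node c ts : verts (Node c ts) = [::] :: verts_forest 0 ts.
Proof. by []. Qed.

Lemma mem_map_cons i (X : seq (seq nat)) p :
  (p \in map (cons i) X) = if p is k :: q then (k == i) && (q \in X) else false.
Proof.
case: p => [|k q]; first by apply/mapP => [[]].
apply/mapP/andP => [[q' q'X [-> ->]]|[/eqP -> qX]]; [by rewrite eqxx | by exists q].
Qed.

Lemma verts_forest_head i l p :
  p \in verts_forest i l -> exists k q, p = k :: q /\ i <= k.
Proof.
elim: l i => //= s l IH i; rewrite mem_cat mem_map_cons => /orP[|/IH[k [q [-> ik]]]].
- by case: p {IH} => // k q /andP[/eqP -> _]; exists i, q.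
- by exists k, q; split => //; lia.
Qed.

Lemma mem_verts_forest i l p : {in l, forall s q, (q \in verts s) = is_vertex s q} ->
  (p \in verts_forest i l) = if p is k :: q then
    (i <= k) && (k - i < size l) && is_vertex (nth leaf0 l (k - i)) q else false.
Proof.
elim: l i p => [|s l IH] i p mem_l /=; first by case: p => // k q; rewrite andbF.
rewrite mem_cat mem_map_cons IH => [|s' l_s']; last first.
  by apply: mem_l; rewrite in_cons l_s' orbT.
case: p => // k q; case: (ltngtP k i) => // ik.
- by rewrite (_ : k - i = (k - i.+1).+1) /= ?ltnS //; lia.
- by rewrite ik subnn /= orbF; apply: mem_l; exact: mem_head.
Qed.

Lemma mem_verts t p : (p \in verts t) = is_vertex t p.
Proof.
elim/ctree_ind_in: t p => c ts IH [|k q]; rewrite verts_node in_cons //=.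
by rewrite (mem_verts_forest _ _ IH) subn0 /is_vertex /=; case: ifP.
Qed.

Lemma uniq_verts_forest i l : {in l, forall s, uniq (verts s)} -> uniq (verts_forest i l).
Proof.
elim: l i => //= s l IH i uniq_l; rewrite cat_uniq IH ?andbT; last first.
  by move=> s' l_s'; apply: uniq_l; rewrite in_cons l_s' orbT.
rewrite map_inj_uniq ?uniq_l ?mem_head //=; last by move=> x y [].
by apply/hasPn => p /verts_forest_head [k [q [-> ik]]]; rewrite mem_map_cons; lia.
Qed.

Lemma uniq_verts t : uniq (verts t).
Proof.
elim/ctree_ind_in: t => c ts IH; rewrite verts_node /= uniq_verts_forest // andbT.
by apply/negP => /verts_forest_head [k [q []]].
Qed.

Lemma pairwise_mem_total (T : eqType) (r : rel T) s x y :
  pairwise r s -> x \in s -> y \in s -> [|| x == y, r x y | r y x].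
Proof.
elim: s => //= a s IH /andP[/allP ra rs]; rewrite !in_cons.
case/orP=> [/eqP -> | xs] /orP[/eqP -> | ys]; rewrite ?eqxx //.
- by rewrite ra ?orbT.
- by rewrite ra ?orbT.
- exact: IH.
Qed.

Fixpoint rcat_branches (i : nat) (L : seq (seq (seq nat))) : seq (seq nat) :=
  if L is A :: L' then rcat_branches i.+1 L' ++ map (cons i) A else [::].

Fixpoint rpost (t : ctree) : seq (seq nat) :=
  let: Node _ ts := t in
  rcat_branches 0 (map rpost ts) ++ (if 1 < size ts then [:: [::]] else [::]).

Lemma rpost_node c ts : rpost (Node c ts) =
  rcat_branches 0 (map rpost ts) ++ (if 1 < size ts then [:: [::]] else [::]).
Proof. by []. Qed.

Lemma rcat_branches_head i L p :
  p \in rcat_branches i L -> exists k q, p = k :: q /\ i <= k.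
Proof.
elim: L i => //= A L IH i; rewrite mem_cat mem_map_cons => /orP[/IH[k [q [-> ik]]]|].
- by exists k, q; split => //; lia.
- by case: p {IH} => // k q /andP[/eqP -> _]; exists i, q.
Qed.

Lemma mem_rcat_branches i L p : (p \in rcat_branches i L) =
  if p is k :: q then (i <= k) && (k - i < size L) && (q \in nth [::] L (k - i))
  else false.
Proof.
elim: L i p => [|A L IH] i p /=; first by case: p => // k q; rewrite andbF.
rewrite mem_cat mem_map_cons IH; case: p => // k q; case: (ltngtP k i) => // ik.
- by rewrite (_ : k - i = (k - i.+1).+1) /= ?ltnS ?orbF //; lia.
- by rewrite ik subnn /= ?orbF.
Qed.

Lemma uniq_rcat_branches i L : all uniq L -> uniq (rcat_branches i L).
Proof.
elim: L i => //= A L IH i /andP[uA uL].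
rewrite cat_uniq IH //= map_inj_uniq ?uA ?andbT //; last by move=> x y [].
apply/hasPn => p; rewrite mem_map_cons; case: p => // k q /andP[/eqP -> _].
by apply/negP => /rcat_branches_head [k' [q' [[<- _]]]]; rewrite ltnn.
Qed.

Lemma pairwise_rcat_branches i L :
  all (pairwise precr) L -> pairwise precr (rcat_branches i L).
Proof.
elim: L i => //= A L IH i /andP[pA pL]; rewrite pairwise_cat IH // pairwise_map.
rewrite (sub_pairwise _ pA) => [|x y /=]; last by rewrite eqxx.
rewrite !andbT; apply/allrelP => p q /rcat_branches_head [k [p' [-> ik]]].
by rewrite mem_map_cons; case: q => // k' q' /andP[/eqP -> _] /=; case: eqP; lia.
Qed.

Lemma mem_rpost t p : (p \in rpost t) = is_nondeg t p.
Proof.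
elim/ctree_ind_in: t p => c ts IH p; rewrite rpost_node mem_cat mem_rcat_branches.
case: p => [|k q] /=; first by case: ifP.
have -> : (k :: q \in if 1 < size ts then [:: [::]] else [::]) = false by case: ifP.
rewrite subn0 size_map orbF.
rewrite /is_nondeg /is_vertex /nchildren /=; case: ltnP => //= lt_k_ts.
by rewrite (nth_map leaf0) // IH ?mem_nth.
Qed.

Lemma uniq_rpost t : uniq (rpost t).
Proof.
elim/ctree_ind_in: t => c ts IH.
rewrite rpost_node cat_uniq uniq_rcat_branches; last first.
  by apply/allP => A /mapP [s ts_s ->]; exact: IH.
case: ifP => _ //=; rewrite orbF andbT; apply/negP => /rcat_branches_head [k [q []]] //.
Qed.

Lemma pairwise_precr_rpost t : pairwise precr (rpost t).
Proof.
elim/ctree_ind_in: t => c ts IH; rewrite rpost_node pairwise_cat pairwise_rcat_branches;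
  last by apply/allP => A /mapP [s ts_s ->]; exact: IH.
case: ifP => _ //=; rewrite ?allrel0r // andbT.
by apply/allrelP => p q /rcat_branches_head [k [p' [-> _]]]; rewrite inE => /eqP ->.
Qed.

Lemma perm_rpost t : perm_eq [seq p <- verts t | is_nondeg t p] (rpost t).
Proof.
apply: uniq_perm; rewrite ?filter_uniq ?uniq_verts ?uniq_rpost // => p.
by rewrite mem_filter mem_verts mem_rpost andb_idr // => /andP[].
Qed.

Lemma sort_prle_nondeg t : sort prle [seq p <- verts t | is_nondeg t p] = rpost t.
Proof.
apply: (sorted_eq prle_trans prle_anti); first exact: (sort_sorted prle_total).
  rewrite sorted_pairwise; last exact: prle_trans.
  by apply: sub_pairwise (pairwise_precr_rpost t) => x y xy; rewrite /prle xy orbT.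
by rewrite perm_sort perm_rpost.
Qed.

Lemma treduced_nchildren t p : treduced t -> is_vertex t p -> nchildren t p != 1.
Proof.
elim/ctree_ind_in: t p => c ts IH [|k q] /andP[ts1 red_ts] //.
rewrite /is_vertex /nchildren /=; case: ifP => // lt_k_ts.
by apply: IH; [exact: mem_nth | exact: (allP red_ts) (mem_nth _ _)].
Qed.

Lemma treduced_nonleaf_nondeg t : treduced t ->
  [seq p <- verts t | is_nonleaf t p] = [seq p <- verts t | is_nondeg t p].
Proof.
move=> red; apply: eq_in_filter => p; rewrite mem_verts => vp.
by rewrite /is_nonleaf /is_nondeg vp /=; have := treduced_nchildren red vp; lia.
Qed.

Lemma wf_colors_node N c ts : wf_colors N (Node c ts) =
  [&& 1 <= c <= N, (if ts is [:: s] then root_color s == c else true)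
    & all (wf_colors N) ts].
Proof. by []. Qed.

Lemma leaves_word_node c ts :
  ts != [::] -> leaves_word (Node c ts) = flatten (map leaves_word ts).
Proof. by case: ts. Qed.

Lemma rho_node c ts : size ts != 1 -> rho (Node c ts) = Node c (map rho ts).
Proof. by case: ts => [|s [|s' l]]. Qed.

Lemma rho_unary c s : rho (Node c [:: s]) = rho s.
Proof. by []. Qed.

Lemma root_color_rho N t : wf_colors N t -> root_color (rho t) = root_color t.
Proof.
elim/ctree_ind_in: t => c ts IH /= /and3P[_].
by case: ts IH => [|s [|s' l]] //= IH /eqP <- /andP[/(IH s (mem_head _ _))].
Qed.

Lemma wf_colors_rho N t : wf_colors N t -> wf_colors N (rho t).
Proof.
elim/ctree_ind_in: t => c ts IH /and3P[c_N unary_c /allP wf_ts].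
have [ts1 | ts_n1] := eqVneq (size ts) 1.
  case: ts ts1 IH wf_ts {unary_c} => [|s [|]] //= _ IH wf_s.
  by apply: IH (mem_head _ _) (wf_s s (mem_head _ _)).
rewrite rho_node //= c_N /=; apply/andP; split.
  by case: ts ts_n1 {IH unary_c wf_ts} => [|s [|]].
by apply/allP => _ /mapP [s ts_s ->]; exact: IH ts_s (wf_ts s ts_s).
Qed.

Lemma treduced_rho t : treduced (rho t).
Proof.
elim/ctree_ind_in: t => c ts IH; have [ts1 | ts_n1] := eqVneq (size ts) 1.
  by case: ts ts1 IH => [|s [|]] //= _ /(_ s (mem_head _ _)).
by rewrite rho_node //= size_map ts_n1 /=; apply/allP => _ /mapP [s ts_s ->]; exact: IH.
Qed.

Lemma leaves_word_rho t : leaves_word (rho t) = leaves_word t.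
Proof.
elim/ctree_ind_in: t => c ts IH; have [ts1 | ts_n1] := eqVneq (size ts) 1.
  by case: ts ts1 IH => [|s [|]] //= _ /(_ s (mem_head _ _)) ->; rewrite cats0.
rewrite rho_node //=; case: ts ts_n1 IH => //= s l _ IH.
rewrite -map_comp IH ?mem_head //; congr (_ ++ flatten _).
by apply/eq_in_map => s' l_s'; apply: IH; rewrite in_cons l_s' orbT.
Qed.

Definition levels t := rev (map size (rpost t)).
Definition nnondeg t := size (rpost t).

Lemma levels_rcat_branches i L : rev (map size (rcat_branches i L)) =
  flatten [seq map succn (rev (map size A)) | A <- L].
Proof.
elim: L i => //= A L IH i.
by rewrite map_cat rev_cat IH map_rev -!map_comp.
Qed.

Lemma levels_node c ts : levels (Node c ts) =
  (if 1 < size ts then [:: 0] else [::]) ++ flatten [seq map succn (levels s) | s <- ts].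
Proof.
rewrite /levels rpost_node map_cat rev_cat levels_rcat_branches -map_comp.
by case: ifP.
Qed.

Lemma levels_unary c s : levels (Node c [:: s]) = map succn (levels s).
Proof. by rewrite levels_node /= cats0. Qed.

Lemma size_levels t : size (levels t) = nnondeg t.
Proof. by rewrite size_rev size_map. Qed.

Lemma nnondeg_node c ts :
  nnondeg (Node c ts) = sumn (map nnondeg ts) + (1 < size ts).
Proof.
rewrite -size_levels levels_node size_cat size_flatten /shape -map_comp addnC.
congr (sumn _ + _); last by case: ifP.
by apply/eq_map => s /=; rewrite size_map size_levels.
Qed.

Lemma nnondeg_rho t : nnondeg (rho t) = nnondeg t.
Proof.
elim/ctree_ind_in: t => c ts IH; have [ts1 | ts_n1] := eqVneq (size ts) 1.
  case: ts ts1 IH => [|s [|]] // _ IH.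
  by rewrite rho_unary IH ?mem_head // nnondeg_node /= addn0 addn0.
rewrite rho_node // !nnondeg_node size_map -map_comp.
by congr (sumn _ + _); apply/eq_in_map => s /IH.
Qed.

Lemma levels_root c ts : (0 \in levels (Node c ts)) = (1 < size ts).
Proof.
rewrite levels_node mem_cat (_ : 0 \in flatten _ = false) ?orbF; first by case: ifP.
by apply/negP => /flattenP [_ /mapP [s _ ->] /mapP [n]].
Qed.

Lemma levels_iota_pairwise t h : levels t = iota 0 h ->
  pairwise (fun x y => size y < size x) (rpost t).
Proof.
move=> lev; have := iota_ltn_sorted 0 h; rewrite -lev rev_sorted sorted_pairwise.
  by rewrite pairwise_map.
by move=> x y z yx zy; exact: ltn_trans zy yx.
Qed.

Lemma orders_agree_of_levels t h : levels t = iota 0 h -> orders_agree t.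
Proof.
move=> /levels_iota_pairwise lev_lt x y nx ny.
rewrite -!mem_rpost in nx ny.
have /pairwise_mem_total/(_ nx ny) :
    pairwise [rel x y | precr x y && (size y < size x)] (rpost t).
  by rewrite pairwise_relI pairwise_precr_rpost.
case/or3P => [/eqP <- | | ].
- by rewrite ll_irr precr_irr.
- by case/andP => xy sxy; rewrite xy /ll sxy.
- by case/andP => yx syx; rewrite (precr_asym yx) (@ll_asym y x) // /ll syx.
Qed.

Lemma sort_lle_nondeg t h : levels t = iota 0 h ->
  sort lle [seq p <- verts t | is_nondeg t p] = rpost t.
Proof.
move=> /levels_iota_pairwise lev_lt.
apply: (sorted_eq lle_trans lle_anti); first exact: (sort_sorted lle_total).
  rewrite sorted_pairwise; last exact: lle_trans.
  by apply: sub_pairwise lev_lt => x y sxy; rewrite /lle /ll sxy orbT.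
by rewrite perm_sort perm_rpost.
Qed.

Lemma tproper_of_levels t : levels t = iota 0 (height t) -> tproper t.
Proof.
move=> lev k lt_k; have : k \in levels t by rewrite lev mem_iota.
by rewrite mem_rev => /mapP [x]; rewrite mem_rpost => nx ->; exists x.
Qed.

Lemma levels_iotaP t :
  levels t = iota 0 (height t) <-> [/\ tproper t, tsimple t & order_reduced t].
Proof.
split=> [lev | [proper simple reduced]].
  have proper := tproper_of_levels lev.
  by have [] := (orders_agree_iff proper).1 (orders_agree_of_levels lev).
have agree := simple_order_reduced_orders_agree proper simple reduced.
apply: (irr_sorted_eq ltn_trans ltnn); last 2 first.
- exact: iota_ltn_sorted.
- move=> k; rewrite mem_rev mem_iota add0n; apply/mapP/idP => [[x + ->]|lt_k].
    by rewrite mem_rpost; exact: nondeg_size_lt_height.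
  by have [x [nx <-]] := proper k lt_k; exists x; rewrite ?mem_rpost.
rewrite rev_sorted sorted_pairwise => [|x y z yx zy]; last exact: ltn_trans zy yx.
rewrite pairwise_map; apply: sub_in_pairwise (allss _) (pairwise_precr_rpost t).
move=> x y; rewrite !mem_rpost => nx ny /(agree x y nx ny) /orP[//|/andP[/eqP sxy]].
by rewrite (simple x y nx ny sxy) lexlt_irr.
Qed.

Section PostOrderProduct.
Variables (R : pzRingType) (Y : nat -> seq nat -> R).
Local Open Scope ring_scope.

Definition Ypost t := \prod_(x <- rpost t) Yvert Y t x.

Lemma Yvert_cons c ts i x :
  (i < size ts)%N -> Yvert Y (Node c ts) (i :: x) = Yvert Y (nth leaf0 ts i) x.
Proof. by move=> lt_i_ts; rewrite /Yvert /= lt_i_ts. Qed.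

Lemma prod_rcat_branches c ts i l : drop i ts = l ->
  \prod_(x <- rcat_branches i (map rpost l)) Yvert Y (Node c ts) x =
  \prod_(s <- rev l) Ypost s.
Proof.
elim: l i => [|s l IH] i drop_i /=; first by rewrite !big_nil.
have lt_i_ts : (i < size ts)%N.
  by rewrite ltnNge; apply/negP => /drop_oversize; rewrite drop_i.
move: drop_i; rewrite (drop_nth leaf0 lt_i_ts) => -[ts_i drop_i].
rewrite rev_cons big_rcons big_cat (IH _ drop_i) big_map; congr (_ * _).
by apply: eq_bigr => x _; rewrite Yvert_cons // ts_i.
Qed.

Lemma Ypost_node c ts : Ypost (Node c ts) = \prod_(s <- rev ts) Ypost s *
  (if (1 < size ts)%N then Ysym Y c (map root_color ts) else 1).
Proof.
rewrite {1}/Ypost rpost_node big_cat /= (prod_rcat_branches c (drop0 ts)).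
by case: ifP => _; rewrite ?big_seq1 ?big_nil.
Qed.

Lemma Ypost_rho N t : wf_colors N t -> Ypost (rho t) = Ypost t.
Proof.
elim/ctree_ind_in: t => c ts IH /and3P[_ unary_c /allP wf_ts].
have [ts1 | ts_n1] := eqVneq (size ts) 1.
  case: ts ts1 IH wf_ts {unary_c} => [|s [|]] // _ IH wf_s.
  rewrite rho_unary Ypost_node /= big_seq1 mulr1.
  exact: IH (mem_head _ _) (wf_s _ (mem_head _ _)).
rewrite rho_node // !Ypost_node size_map -map_rev big_map; congr (_ * _).
  by apply: eq_big_seq => s; rewrite mem_rev => ts_s; exact: IH ts_s (wf_ts s ts_s).
case: ifP => // _; rewrite -map_comp; congr Ysym; apply/eq_in_map => s ts_s /=.
exact: root_color_rho (wf_ts s ts_s).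
Qed.

End PostOrderProduct.

Fixpoint layered_at (t : ctree) (r : nat) : bool :=
  let: Node _ ts := t in
  if ts is [::] then r == 0 else (0 < r) && all (fun s => layered_at s r.-1) ts.

Lemma layered_at_node c ts r : ts != [::] ->
  layered_at (Node c ts) r = (0 < r) && all (fun s => layered_at s r.-1) ts.
Proof. by case: ts. Qed.

Lemma is_leaf_cons c ts k q :
  is_leaf (Node c ts) (k :: q) = (k < size ts) && is_leaf (nth leaf0 ts k) q.
Proof. by rewrite /is_leaf /is_vertex /nchildren /=; case: ifP. Qed.

Lemma exists_leaf t : exists p, is_leaf t p.
Proof.
elim/ctree_ind_in: t => c [|s l] IH; first by exists [::].
by have [q leaf_q] := IH s (mem_head _ _); exists (0 :: q); rewrite is_leaf_cons.
Qed.

Lemma layered_atP t r :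
  reflect (forall p, is_leaf t p -> size p = r) (layered_at t r).
Proof.
apply: (iffP idP); elim/ctree_ind_in: t r => c [|s l] IH r.
- by move=> /eqP -> [|k q] //; rewrite is_leaf_cons.
- rewrite layered_at_node // => /andP[r_gt0 /allP lay_sl] [|k q].
    by rewrite /is_leaf.
  rewrite is_leaf_cons => /andP[lt_k leaf_q]; have sl_k := mem_nth leaf0 lt_k.
  by rewrite /= (IH _ sl_k r.-1 (lay_sl _ sl_k) _ leaf_q) prednK.
- by move=> leaves_r; rewrite /= -(leaves_r [::]).
- move=> leaves_r; rewrite layered_at_node //; have [q leaf_q] := exists_leaf s.
  apply/andP; split.
    by have := leaves_r (0 :: q); rewrite is_leaf_cons leaf_q => /(_ isT) <-.
  apply/allP => s' sl_s'; apply: IH => // q' leaf_q'.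
  have := leaves_r (index s' (s :: l) :: q').
  by rewrite is_leaf_cons index_mem sl_s' nth_index // leaf_q' => /(_ isT) /= <-.
Qed.

Lemma foldr_maxn_const (l : seq nat) m :
  l != [::] -> all (pred1 m) l -> foldr maxn 0 l = m.
Proof.
elim: l => //= n [|n' l] IH _ /andP[/eqP -> m_l]; first by rewrite maxn0.
by rewrite IH // maxnn.
Qed.

Lemma layered_at_height t r : layered_at t r -> height t = r.
Proof.
elim/ctree_ind_in: t r => c [|s l] IH r; first by move/eqP.
rewrite layered_at_node // => /andP[r_gt0 /allP lay_sl].
rewrite (_ : height _ = (foldr maxn 0 (map height (s :: l))).+1) //.
rewrite (@foldr_maxn_const _ r.-1) ?prednK //.
by apply/allP => _ /mapP [s' sl_s' ->] /=; rewrite (IH s' sl_s' r.-1) ?lay_sl.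
Qed.

Lemma layered_at0 t : layered_at t 0 -> t = Node (root_color t) [::].
Proof. by case: t => c [|s l]. Qed.

Lemma layered_at_gt0 t r : 0 < r -> layered_at t r -> kids t != [::].
Proof. by case: t => c [|s l] //= /gtn_eqF ->. Qed.

(** * Injectivity of the contraction *)

Lemma flatten_levels_inj ts1 ts2 : map nnondeg ts1 = map nnondeg ts2 ->
  flatten [seq map succn (levels s) | s <- ts1] =
  flatten [seq map succn (levels s) | s <- ts2] ->
  map levels ts1 = map levels ts2.
Proof.
move=> nn12 flat12; apply: (inj_map (inj_map succn_inj)); rewrite -!map_comp.
have shape_levels ts : shape [seq map succn (levels s) | s <- ts] = map nnondeg ts.
  by rewrite /shape -map_comp; apply/eq_map => s /=; rewrite size_map size_levels.
rewrite -(flattenK [seq map succn (levels s) | s <- ts1]).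
by rewrite -(flattenK [seq map succn (levels s) | s <- ts2]) flat12 !shape_levels nn12.
Qed.

Lemma layered_rho_levels_inj N r t1 t2 :
  wf_colors N t1 -> wf_colors N t2 -> layered_at t1 r -> layered_at t2 r ->
  rho t1 = rho t2 -> levels t1 = levels t2 -> t1 = t2.
Proof.
elim/ctree_ind_in: t1 t2 r => c1 ts1 IH [c2 ts2] r wf1 wf2 lay1 lay2 rho12 lev12.
have [r0 | r_gt0] := posnP r.
  move: lay1 lay2 rho12; rewrite r0 => /layered_at0 [->] /layered_at0 [->].
  by case=> ->.
have /= ts1_nil := layered_at_gt0 r_gt0 lay1.
have /= ts2_nil := layered_at_gt0 r_gt0 lay2.
move: lay1 lay2; rewrite !layered_at_node // => /andP[_ /allP lay1] /andP[_ /allP lay2].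
case/and3P: wf1 => _ unary1 /allP wf1; case/and3P: wf2 => _ unary2 /allP wf2.
have branch12 : (1 < size ts1) = (1 < size ts2).
  by rewrite -(levels_root c1 ts1) -(levels_root c2 ts2) lev12.
have [branch1 | unary_ts1] := ltnP 1 (size ts1).
- have branch2 : 1 < size ts2 by rewrite -branch12.
  move: rho12 lev12; rewrite !rho_node ?gtn_eqF // !levels_node branch1 branch2.
  case=> <- rho12 [] flat12; congr Node.
  have nn12 : map nnondeg ts1 = map nnondeg ts2.
    by have := congr1 (map nnondeg) rho12; rewrite -!map_comp !(eq_map nnondeg_rho).
  have lev12 := flatten_levels_inj nn12 flat12.
  have size12 : size ts1 = size ts2 by rewrite -(size_map rho ts1) rho12 size_map.
  apply: (eq_from_nth (x0 := leaf0) size12) => k lt_k1.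
  have lt_k2 : k < size ts2 by rewrite -size12.
  have ts1_k := mem_nth leaf0 lt_k1; have ts2_k := mem_nth leaf0 lt_k2.
  apply: (IH _ ts1_k _ r.-1 (wf1 _ ts1_k) (wf2 _ ts2_k) (lay1 _ ts1_k) (lay2 _ ts2_k)).
    by rewrite -!(nth_map leaf0 leaf0 rho) // rho12.
  by rewrite -!(nth_map leaf0 [::] levels) // lev12.
- have unary_ts2 : size ts2 <= 1 by rewrite leqNgt -branch12 -leqNgt.
  case: ts1 ts1_nil unary_ts1 IH lay1 wf1 unary1 rho12 lev12 {branch12} => [|s1 [|]] //.
  case: ts2 ts2_nil unary_ts2 lay2 wf2 unary2 => [|s2 [|]] //.
  move=> _ _ lay2 wf2 /eqP <- _ _ IH lay1 wf1 /eqP <-.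
  rewrite !rho_unary !levels_unary => rho12 /(inj_map succn_inj) lev12.
  have s1s := mem_head s1 [::]; have s2s := mem_head s2 [::].
  have := IH _ s1s s2 r.-1 (wf1 _ s1s) (wf2 _ s2s) (lay1 _ s1s) (lay2 _ s2s).
  by move/(_ rho12 lev12) ->.
Qed.

(** * Expansion of a reduced tree *)

Fixpoint stretch (n : nat) (t : ctree) : ctree :=
  if n is n'.+1 then Node (root_color t) [:: stretch n' t] else t.

(* Branch [i] is expanded below [S_i] unary vertices, [S_i] being the number of
   non-degenerate vertices in the branches to its left: its own non-degenerate
   vertices then lie on the levels just below theirs. *)
Fixpoint stretch_branches (f : ctree -> nat -> ctree) (r S : nat) (l : seq ctree) :=
  if l is s :: l' then
    stretch S (f s (r.-1 - S)) :: stretch_branches f r (S + nnondeg s) l'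
  else [::].

Fixpoint expand (t : ctree) (r : nat) : ctree :=
  let: Node c ts := t in
  if ts is [::] then stretch r (Node c [::]) else Node c (stretch_branches expand r 0 ts).

Lemma expand_node c ts r : ts != [::] ->
  expand (Node c ts) r = Node c (stretch_branches expand r 0 ts).
Proof. by case: ts. Qed.

Lemma root_color_stretch n t : root_color (stretch n t) = root_color t.
Proof. by case: n. Qed.

Lemma rho_stretch n t : rho (stretch n t) = rho t.
Proof. by elim: n. Qed.

Lemma leaves_word_stretch n t : leaves_word (stretch n t) = leaves_word t.
Proof. by elim: n => //= n ->; rewrite cats0. Qed.

Lemma wf_colors_stretch N n t : wf_colors N (stretch n t) = wf_colors N t.
Proof.
elim: n => //= n ->; rewrite root_color_stretch eqxx andbT.
by case: t => c ts /=; rewrite andbA andbb.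
Qed.

Lemma layered_at_stretch n t r : layered_at t r -> layered_at (stretch n t) (n + r).
Proof. by move=> lay_t; elim: n => //= n ->. Qed.

Lemma levels_stretch n t : levels (stretch n t) = map (addn n) (levels t).
Proof.
elim: n => [|n IH]; first by rewrite map_id_in.
by rewrite levels_unary IH -map_comp; apply/eq_map => k /=; rewrite addSn.
Qed.

Lemma size_stretch_branches f r S l : size (stretch_branches f r S l) = size l.
Proof. by elim: l S => //= s l IH S; rewrite IH. Qed.

Lemma map_stretch_branches (T : Type) (phi psi : ctree -> T) f r S l :
  (forall n t, phi (stretch n t) = phi t) -> {in l, forall s r', phi (f s r') = psi s} ->
  map phi (stretch_branches f r S l) = map psi l.
Proof.
move=> phi_stretch; elim: l S => //= s l IH S phi_f.
rewrite phi_stretch phi_f ?mem_head // IH // => s' l_s'.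
by apply: phi_f; rewrite in_cons l_s' orbT.
Qed.

Lemma levels_stretch_branches f r S l :
  {in l, forall s r', levels (f s r') = iota 0 (nnondeg s)} ->
  flatten [seq map succn (levels s') | s' <- stretch_branches f r S l] =
  iota S.+1 (sumn (map nnondeg l)).
Proof.
elim: l S => //= s l IH S levels_f.
rewrite IH => [|s' l_s']; last by apply: levels_f; rewrite in_cons l_s' orbT.
rewrite levels_stretch levels_f ?mem_head // iotaD addSn; congr (_ ++ _).
by rewrite -map_comp -[S.+1]addn0 iotaDl; apply/eq_map => k /=; rewrite addSn.
Qed.

Lemma layered_stretch_branches f r S l :
  {in l, forall s r', nnondeg s <= r' -> layered_at (f s r') r'} ->
  S + sumn (map nnondeg l) <= r.-1 ->
  all (fun s => layered_at s r.-1) (stretch_branches f r S l).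
Proof.
elim: l S => //= s l IH S lay_f le_r; apply/andP; split.
  have lay_s : layered_at (f s (r.-1 - S)) (r.-1 - S).
    by apply: lay_f; [exact: mem_head | lia].
  by have := layered_at_stretch S lay_s; rewrite subnKC //; lia.
apply: IH; last by lia.
by move=> s' l_s'; apply: lay_f; rewrite in_cons l_s' orbT.
Qed.

Lemma root_color_expand t r : root_color (expand t r) = root_color t.
Proof. by case: t => c [|s l] //=; rewrite root_color_stretch. Qed.

Lemma rho_expand t r : treduced t -> rho (expand t r) = t.
Proof.
elim/ctree_ind_in: t r => c [|s l] IH r; first by rewrite /= rho_stretch.
case/andP => ts_n1 /allP red_ts.
rewrite expand_node // rho_node ?size_stretch_branches //.
rewrite (map_stretch_branches (psi := id) r 0 rho_stretch) ?map_id // => s' sl_s' r'.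
exact: IH sl_s' r' (red_ts s' sl_s').
Qed.

Lemma leaves_word_expand t r : leaves_word (expand t r) = leaves_word t.
Proof.
elim/ctree_ind_in: t r => c [|s l] IH r; first by rewrite /= leaves_word_stretch.
have sb_nil : stretch_branches expand r 0 (s :: l) != [::].
  by rewrite -size_eq0 size_stretch_branches.
rewrite expand_node // !leaves_word_node //.
by rewrite (map_stretch_branches r 0 leaves_word_stretch IH).
Qed.

Lemma wf_colors_expand N t r : wf_colors N t -> wf_colors N (expand t r).
Proof.
elim/ctree_ind_in: t r => c [|s l] IH r; first by rewrite /= wf_colors_stretch.
case/and3P => c_N unary_c /allP wf_ts; rewrite expand_node // wf_colors_node c_N andTb.
have wf_sb : map (wf_colors N) (stretch_branches expand r 0 (s :: l)) =
              map (fun=> true) (s :: l).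
  apply: map_stretch_branches (wf_colors_stretch N) _ => s' sl_s' r'.
  exact: IH sl_s' r' (wf_ts s' sl_s').
apply/andP; split.
  by case: l {IH wf_sb wf_ts} unary_c => //= /eqP <-; rewrite root_color_expand.
by apply/allP => x /(map_f (wf_colors N)); rewrite wf_sb => /mapP [? _ ->].
Qed.

Lemma levels_expand t r : treduced t -> levels (expand t r) = iota 0 (nnondeg t).
Proof.
elim/ctree_ind_in: t r => c [|s l] IH r; first by rewrite /= levels_stretch.
case/andP => ts_n1 /allP red_ts.
have branch : 1 < size (s :: l) by case: l {IH red_ts} ts_n1.
rewrite expand_node // levels_node size_stretch_branches branch nnondeg_node branch.
rewrite (levels_stretch_branches _ _ (l := s :: l)) => [|s' sl_s' r']; last first.
  exact: IH sl_s' r' (red_ts s' sl_s').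
by rewrite addn1.
Qed.

Lemma layered_at_expand t r : treduced t -> nnondeg t <= r -> layered_at (expand t r) r.
Proof.
elim/ctree_ind_in: t r => c [|s l] IH r.
  by move=> _ _; rewrite /= -[r in layered_at _ r]addn0; apply: layered_at_stretch.
case/andP => ts_n1 /allP red_ts.
have branch : 1 < size (s :: l) by case: l {IH red_ts} ts_n1.
rewrite nnondeg_node branch addn1 => le_r.
rewrite expand_node // layered_at_node; last first.
  by rewrite -size_eq0 size_stretch_branches.
apply/andP; split; first lia.
apply: layered_stretch_branches; last by rewrite add0n; lia.
by move=> s' sl_s' r'; apply: IH sl_s' r' (red_ts s' sl_s').
Qed.

Section OrderedSimpleTrees.
Variables (N j : nat) (u : seq nat).

Lemma OST_levels t : OST N j u t -> levels t = iota 0 (height t).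
Proof. by case=> _ _ _ [_ proper] [simple reduced]; apply/levels_iotaP. Qed.

Lemma height_OST t : OST N j u t -> height t = nnondeg t.
Proof. by move/OST_levels => lev; rewrite -size_levels lev size_iota. Qed.

Lemma OST_rho_RT t : OST N j u t -> RT N j u (rho t).
Proof.
case=> wf root_t leaves_t _ _; split; rewrite ?treduced_rho ?wf_colors_rho //.
  by rewrite (root_color_rho wf).
by rewrite leaves_word_rho.
Qed.

Lemma OST_rho_inj t1 t2 : OST N j u t1 -> OST N j u t2 -> rho t1 = rho t2 -> t1 = t2.
Proof.
move=> ost1 ost2 rho12; have lev1 := OST_levels ost1; have lev2 := OST_levels ost2.
have height12 : height t1 = height t2.
  by rewrite !height_OST // -nnondeg_rho rho12 nnondeg_rho.
case: ost1 ost2 => wf1 _ _ [lay1 _] _ [wf2 _ _ [lay2 _] _].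
have lay_t1 : layered_at t1 (height t1) by exact/layered_atP.
have lay_t2 : layered_at t2 (height t1) by rewrite height12; exact/layered_atP.
apply: (layered_rho_levels_inj wf1 wf2 lay_t1 lay_t2 rho12).
by rewrite lev1 lev2 height12.
Qed.

Lemma RT_rho_surj t : RT N j u t -> exists t', OST N j u t' /\ rho t' = t.
Proof.
case=> wf red root_t leaves_t; exists (expand t (nnondeg t)).
split; last exact: rho_expand.
have lay := layered_at_expand red (leqnn _); have height_t := layered_at_height lay.
set t' := expand t (nnondeg t).
have [proper simple reduced] : [/\ tproper t', tsimple t' & order_reduced t'].
  by apply/levels_iotaP; rewrite levels_expand // height_t.
split; rewrite ?root_color_expand ?leaves_word_expand ?wf_colors_expand //.
by split=> // p leaf_p; rewrite height_t; move/layered_atP: lay; apply.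
Qed.

Lemma Omega_Lambda_r_rho (R : pzRingType) (Y : nat -> seq nat -> R) t :
  OST N j u t -> Omega Y t = Lambda_r Y (rho t).
Proof.
move=> ost; rewrite /Omega (sort_lle_nondeg (OST_levels ost)) /Lambda_r.
rewrite treduced_nonleaf_nondeg ?treduced_rho // sort_prle_nondeg.
by case: ost => wf _ _ _ _; rewrite -[LHS]/(Ypost Y t) -(Ypost_rho Y wf).
Qed.

Lemma nlayers_nvert_rho t : OST N j u t -> nlayers t = nvert (rho t).
Proof.
move=> ost; rewrite /nvert treduced_nonleaf_nondeg ?treduced_rho //.
rewrite (perm_size (perm_rpost _)) -/(nnondeg _) nnondeg_rho; exact: height_OST.
Qed.

End OrderedSimpleTrees.

Theorem theorem10 (N : nat) (hN : (1 <= N)%N) :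
  (* (a) *)
  (forall T : ctree, wf_colors N T -> tlayered T -> tproper T ->
     ((forall x y, is_nondeg T x -> is_nondeg T y -> (ll x y <-> precr x y))
      <-> (tsimple T /\ order_reduced T))) /\
  (* (b) *)
  (forall (j : nat) (u : seq nat), (1 <= j <= N)%N ->
     (forall T, OST N j u T -> RT N j u (rho T)) /\
     (forall T1 T2, OST N j u T1 -> OST N j u T2 -> rho T1 = rho T2 -> T1 = T2) /\
     (forall T, RT N j u T -> exists T', OST N j u T' /\ rho T' = T)) /\
  (* (c) *)
  (forall (j : nat) (u : seq nat) (T T' : ctree), (1 <= j <= N)%N ->
     RT N j u T -> OST N j u T' -> rho T' = T ->
     (forall (R : pzRingType) (Y : nat -> seq nat -> R),
        Omega Y T' = Lambda_r Y T) /\ nlayers T' = nvert T).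
Proof.
split; [|split].
- by move=> T _ _; exact: orders_agree_iff.
- move=> j u _; split; first exact: OST_rho_RT.
  by split; [exact: OST_rho_inj | exact: RT_rho_surj].
- move=> j u T T' _ _ ost <-; split; last exact: nlayers_nvert_rho ost.
  by move=> R Y; exact: Omega_Lambda_r_rho ost.
Qed.
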